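(* Let $R$ be a commutative ring with identity and $n$ a positive integer. If $R[X]_A$ satisfies the ascending chain condition on $n$-generated ideals, then so does $R$.
   Context: $X$ is an indeterminate over $R$, $A=\{f\in R[X]\mid f(0)=1\}$, and $R[X]_A$ is the localization of $R[X]$ at $A$. An ideal is $n$-generated if it is generated by $n$ elements; a ring satisfies the $n$-ascending chain condition if every ascending chain of $n$-generated ideals stabilizes. *)

From mathcomp Require Import all_boot all_order all_algebra.
Set Implicit Arguments. Unset Strict Implicit. Unset Printing Implicit Defensive.
Import GRing.Theory.
Local Open Scope ring_scope.

Definition gen_ideal (R : comNzRingType) (n : nat) (a : 'I_n -> R) : R -> Prop :=
  fun x => exists r : 'I_n -> R, x = \sum_(i < n) r i * a i.

Definition n_acc (R : comNzRingType) (n : nat) : Prop :=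
  forall a : nat -> 'I_n -> R,
    (forall k x, gen_ideal (a k) x -> gen_ideal (a k.+1) x) ->
    exists N, forall k, (N <= k)%N -> forall x, gen_ideal (a k) x <-> gen_ideal (a N) x.

(* A fraction is a pair (numerator, denominator); it is an element of S^{-1}T
   when its denominator lies in S.  Two fractions (a,s), (b,t) represent the
   same element iff u (a t - b s) = 0 for some u in S. *)

Definition frac (T : comNzRingType) := (T * T)%type.
Definition frac_ok (T : comNzRingType) (S : pred T) (x : frac T) := S x.2.
Definition frac_eq (T : comNzRingType) (S : pred T) (x y : frac T) : Prop :=
  exists2 u, S u & u * (x.1 * y.2 - y.1 * x.2) = 0.
Definition frac_add (T : comNzRingType) (x y : frac T) : frac T :=
  (x.1 * y.2 + y.1 * x.2, x.2 * y.2).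
Definition frac_mul (T : comNzRingType) (x y : frac T) : frac T :=
  (x.1 * y.1, x.2 * y.2).
Definition frac_zero (T : comNzRingType) : frac T := (0, 1).

Definition loc_gen_ideal (T : comNzRingType) (S : pred T) (n : nat)
    (a : 'I_n -> frac T) (x : frac T) : Prop :=
  exists r : 'I_n -> frac T, (forall i, frac_ok S (r i)) /\
    frac_eq S x (\big[@frac_add T/frac_zero T]_(i < n) frac_mul (r i) (a i)).

Definition loc_n_acc (T : comNzRingType) (S : pred T) (n : nat) : Prop :=
  forall a : nat -> 'I_n -> frac T,
    (forall k i, frac_ok S (a k i)) ->
    (forall k x, frac_ok S x -> loc_gen_ideal S (a k) x -> loc_gen_ideal S (a k.+1) x) ->
    exists N, forall k, (N <= k)%N -> forall x, frac_ok S x ->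
      (loc_gen_ideal S (a k) x <-> loc_gen_ideal S (a N) x).

Definition setA (R : comNzRingType) : pred {poly R} := fun f => f.[0] == 1.

From mathcomp Require Import all_boot all_order all_algebra.
From mathcomp Require Import ring.

Set Implicit Arguments.
Unset Strict Implicit.
Unset Printing Implicit Defensive.
Import GRing.Theory.
Local Open Scope ring_scope.

(* Send an n-generated ideal I of R to the extended ideal I R[X]_A.  Extension
   preserves inclusions, and contracting back to R recovers I: if v r lies in
   the extension of I in R[X] for some v with v(0) = 1, evaluating at 0 puts r
   in I.  So an ascending chain of n-generated ideals of R extends to one of
   R[X]_A, and its stabilization contracts to a stabilization in R. *)

Section GeneratedIdeal.
Variables (T : comNzRingType) (n : nat).
Implicit Types (b : 'I_n -> T) (x y : T).

Lemma gen_ideal0 b : gen_ideal b 0.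
Proof. by exists (fun=> 0); rewrite big1 // => i _; rewrite mul0r. Qed.

Lemma gen_idealD b x y : gen_ideal b x -> gen_ideal b y -> gen_ideal b (x + y).
Proof.
move=> [r ->] [s ->]; exists (fun i => r i + s i).
by rewrite -big_split; apply: eq_bigr => i _; rewrite mulrDl.
Qed.

Lemma gen_idealMl b z x : gen_ideal b x -> gen_ideal b (z * x).
Proof.
move=> [r ->]; exists (fun i => z * r i).
by rewrite mulr_sumr; apply: eq_bigr => i _; rewrite mulrA.
Qed.

Lemma gen_ideal_gen b i : gen_ideal b (b i).
Proof.
exists (fun j => (j == i)%:R).
rewrite (bigD1 i) //= eqxx mul1r big1 ?addr0 // => j /negPf ->.
by rewrite mul0r.
Qed.

Lemma gen_ideal_sum b (I : Type) (s : seq I) (P : pred I) (F : I -> T) :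
  (forall i, P i -> gen_ideal b (F i)) -> gen_ideal b (\sum_(i <- s | P i) F i).
Proof. by move=> bF; apply: big_ind => //; [apply: gen_ideal0 | apply: gen_idealD]. Qed.

Lemma gen_ideal_sub b b' x :
  (forall i, gen_ideal b' (b i)) -> gen_ideal b x -> gen_ideal b' x.
Proof. by move=> bb' [r ->]; apply: gen_ideal_sum => i _; apply: gen_idealMl. Qed.

Lemma gen_ideal_rmorph (T' : comNzRingType) (f : {rmorphism T -> T'}) b x :
  gen_ideal b x -> gen_ideal (f \o b) (f x).
Proof.
move=> [r ->]; exists (f \o r).
by rewrite rmorph_sum; apply: eq_bigr => i _; rewrite rmorphM.
Qed.

End GeneratedIdeal.

Section ExtendedIdeal.
Variables (T : comNzRingType) (S : pred T) (n : nat).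
Hypotheses (S1 : S 1) (SM : forall u v, S u -> S v -> S (u * v)).
Implicit Types (b : 'I_n -> T) (x : frac T).

Definition frac_of b : 'I_n -> frac T := fun i => (b i, 1).

Definition frac_comb b (r : 'I_n -> frac T) : frac T :=
  \big[@frac_add T/frac_zero T]_(i < n) frac_mul (r i) (frac_of b i).

Lemma frac_comb_gen_ideal b r : (forall i, S (r i).2) ->
  S (frac_comb b r).2 /\ gen_ideal b (frac_comb b r).1.
Proof.
move=> Sr; rewrite /frac_comb; apply: (big_ind (fun y : frac T => S y.2 /\ gen_ideal b y.1)).
- by split; [apply: S1 | apply: gen_ideal0].
- move=> [y1 d1] [y2 d2] /= [Sd1 y1b] [Sd2 y2b]; split; first exact: SM.
  by apply: gen_idealD; rewrite mulrC; apply: gen_idealMl.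
- by move=> i _ /=; rewrite mulr1; split; [apply: Sr | apply: gen_idealMl; apply: gen_ideal_gen].
Qed.

Lemma frac_comb_common_den b (q : 'I_n -> T) w :
  (frac_comb b (fun i => (q i, w))).1 * w =
  (frac_comb b (fun i => (q i, w))).2 * \sum_(i < n) q i * b i.
Proof.
rewrite /frac_comb; elim: (index_enum _) => [|i s IH]; first by rewrite !big_nil /=; ring.
by rewrite !big_cons /= !mulr1 mulrDl -mulrA (mulrC _ w) IH; ring.
Qed.

Lemma loc_gen_idealP b x : S x.2 ->
  loc_gen_ideal S (frac_of b) x <-> exists2 v, S v & gen_ideal b (v * x.1).
Proof.
move=> Sx; split.
- move=> [r [Sr [u Su /eqP]]]; rewrite mulrBr subr_eq0 => /eqP ux.
  have [SB Bb] := frac_comb_gen_ideal b Sr.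
  rewrite -/(frac_comb b r) in ux.
  exists (u * (frac_comb b r).2); first exact: SM.
  have -> : u * (frac_comb b r).2 * x.1 = u * x.2 * (frac_comb b r).1.
    by rewrite mulrAC -mulrA ux; ring.
  exact: gen_idealMl.
- move=> [v Sv [q vx]]; set w := v * x.2.
  have Sw : S w by apply: SM.
  exists (fun i => (q i, w)); split => //; exists w => //.
  apply/eqP; rewrite mulrBr subr_eq0; apply/eqP.
  have -> : w * ((frac_comb b (fun i => (q i, w))).1 * x.2) =
            x.2 * ((frac_comb b (fun i => (q i, w))).1 * w) by ring.
  by rewrite frac_comb_common_den -vx /w; ring.
Qed.

Lemma loc_gen_ideal_sub b b' x : S x.2 -> (forall i, gen_ideal b' (b i)) ->
  loc_gen_ideal S (frac_of b) x -> loc_gen_ideal S (frac_of b') x.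
Proof.
move=> Sx bb' /(loc_gen_idealP _ Sx) [v Sv vx].
by apply/(loc_gen_idealP _ Sx); exists v => //; apply: gen_ideal_sub vx.
Qed.

End ExtendedIdeal.

Section PolyLocalization.
Variables (R : comNzRingType) (n : nat).

Lemma setA1 : setA (1 : {poly R}).
Proof. by rewrite /setA hornerC. Qed.

Lemma setAM (f g : {poly R}) : setA f -> setA g -> setA (f * g).
Proof. by rewrite /setA hornerM => /eqP -> /eqP ->; rewrite mulr1. Qed.

Lemma gen_ideal_contract (c : 'I_n -> R) r :
  loc_gen_ideal (@setA R) (frac_of (polyC \o c)) (r%:P, 1) <-> gen_ideal c r.
Proof.
rewrite (loc_gen_idealP setA1 setAM) /=; last exact: setA1.
split=> [[v /eqP v0 /(gen_ideal_rmorph (horner_eval 0))] | /(gen_ideal_rmorph polyC) cr].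
- rewrite /= horner_evalE hornerM hornerC v0 mul1r; apply: gen_ideal_sub => i.
  by rewrite /= horner_evalE hornerC; apply: gen_ideal_gen.
- by exists 1; [apply: setA1 | rewrite mul1r].
Qed.

End PolyLocalization.

Theorem mainTheorem4 (R : comNzRingType) (n : nat) :
  (0 < n)%N -> loc_n_acc (@setA R) n -> n_acc R n.
Proof.
(* The argument does not use n > 0. *)
move=> _ accA a a_incr.
have [||N stableN] := accA (fun k => frac_of (polyC \o a k)).
- by move=> k i; apply: setA1.
- move=> k x Sx; apply: (loc_gen_ideal_sub (@setA1 R) (@setAM R) Sx) => i.
  by apply: (gen_ideal_rmorph polyC); apply: a_incr; apply: gen_ideal_gen.
exists N => k leNk x.
by rewrite -!gen_ideal_contract; apply: stableN => //; apply: setA1.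
Qed.
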